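(* Let $(x_i(t),v_i(t))_{i=1}^N$ follow the sticky particle Cucker–Smale dynamics, and let $\psi_i(t):=v_i(t)+\sum_{j=1}^N m_j\,\omega(x_i(t)-x_j(t))$. Fix $i\in\{1,\dots,N\}$ and a time $t>0$, and set $i_*(t):=\min J_i(t)$, $i^*(t):=\max J_i(t)$. Then for every $k\in J_i(t)$, $$\frac{\sum_{j=i_*(t)}^{k}m_j\psi_j(t-)}{\sum_{j=i_*(t)}^{k}m_j}\;\ge\;\frac{\sum_{j\in J_i(t)}m_j\psi_j(t-)}{\sum_{j\in J_i(t)}m_j}=\psi_i(t+)\;\ge\;\frac{\sum_{j=k}^{i^*(t)}m_j\psi_j(t-)}{\sum_{j=k}^{i^*(t)}m_j}.$$
   Context: Standing assumption (H): $\omega:\mathbb{R}\to[0,+\infty)$, $\omega\in W^{1,1}(\mathbb{R})\cap W^{1,\infty}(\mathbb{R})$, $\int_{\mathbb{R}}\omega\,dx=1$, and $\phi:=\omega'\in L^1(\mathbb{R})\cap L^\infty(\mathbb{R})$. Sticky particle Cucker–Smale dynamics: given $N\in\mathbb{N}$, masses $m_1,\dots,m_N>0$ with $\sum_i m_i=1$, initial positions $x_1^0\le\dots\le x_N^0$ and initial velocities $v_1^0,\dots,v_N^0$, the trajectories $(x_i(t),v_i(t))$, $t\ge0$, have continuous positions with $x_1(t)\le\dots\le x_N(t)$. Let $J_i(t):=\{j\in\{1,\dots,N\}: x_j(t)=x_i(t)\}$; particles that meet stick together, i.e. $J_i(t)\subseteq J_i(s)$ for $0\le t\le s$. A collision time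 is a time at which two or more particles that were apart come to have the same position for the first time. At times $t$ that are not collision times, $\dot x_i=v_i$ and $\dot v_i=\sum_{j=1}^N m_j\phi(x_i-x_j)(v_j-v_i)$. At a collision time $t$, the particles in $J_i(t)$ continue with the common velocity $v_i(t+)=\frac{\sum_{j\in J_i(t)}m_jv_j(t-)}{\sum_{j\in J_i(t)}m_j}$. *)

From HB Require Import structures.
From mathcomp Require Import all_boot all_order all_algebra.
From mathcomp Require Import all_classical all_reals all_analysis.
Set Implicit Arguments. Unset Strict Implicit. Unset Printing Implicit Defensive.
Import Order.TTheory GRing.Theory Num.Theory.
Import numFieldNormedType.Exports.
Local Open Scope classical_set_scope.
Local Open Scope ring_scope.

Section Defs.
Context {R : realType}.

(* Standing assumption (H).  omega is the (absolutely continuous) representative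
   of an element of W^{1,1} \cap W^{1,oo}; phi is a (bounded, measurable)
   representative of its weak derivative omega'. *)
Record standing_H (omega phi : R -> R) : Prop := StandingH {
  H_omega_ge0 : forall y, 0 <= omega y;
  H_omega_meas : measurable_fun setT omega;
  H_omega_L1 : (@lebesgue_measure R).-integrable setT (EFin \o omega);
  H_omega_Linf : exists M : R, forall y, `|omega y| <= M;
  H_phi_meas : measurable_fun setT phi;
  H_phi_L1 : (@lebesgue_measure R).-integrable setT (EFin \o phi);
  H_phi_Linf : exists M : R, forall y, `|phi y| <= M;
  H_omega_mass : (\int[@lebesgue_measure R]_y (omega y)%:E = 1%E)%E;
  H_phi_deriv : forall a b : R, a <= b ->
         ((omega b - omega a)%:E =
          \int[@lebesgue_measure R]_(y in `[a, b]) (phi y)%:E)%E }.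

Definition Jset N (x : 'I_N -> R -> R) (i : 'I_N) (t : R) : {set 'I_N} :=
  [set j | x j t == x i t].

Definition ilo N (x : 'I_N -> R -> R) (i : 'I_N) (t : R) : 'I_N :=
  [arg min_(j < i in Jset x i t) (j : nat)].
Definition ihi N (x : 'I_N -> R -> R) (i : 'I_N) (t : R) : 'I_N :=
  [arg max_(j > i in Jset x i t) (j : nat)].

Definition collision_time N (x : 'I_N -> R -> R) (t : R) : Prop :=
  0 < t /\ exists j k : 'I_N,
    x j t = x k t /\ forall s, 0 <= s -> s < t -> x j s <> x k s.

Definition left_lim (f : R -> R) (t : R) : R := lim (f x @[x --> t^'-]).
Definition right_lim (f : R -> R) (t : R) : R := lim (f x @[x --> t^'+]).

Record sticky_CS N (m : 'I_N -> R) (phi : R -> R) (x0 v0 : 'I_N -> R)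
  (x v : 'I_N -> R -> R) : Prop := StickyCS {
  SCS_init : forall j, x j 0 = x0 j /\ v j 0 = v0 j;
  SCS_cont : forall j, {within [set s | 0 <= s], continuous (x j)};
  SCS_order : forall t, 0 <= t -> forall j k : 'I_N, (j <= k)%N -> x j t <= x k t;
  SCS_sticky : forall (j k : 'I_N) (t s : R), 0 <= t -> t <= s ->
          x j t = x k t -> x j s = x k s;
  SCS_ode : forall t, 0 < t -> ~ collision_time x t -> forall j,
          is_derive t 1 (x j) (v j t) /\
          is_derive t 1 (v j)
            (\sum_(l : 'I_N) m l * phi (x j t - x l t) * (v l t - v j t));
  SCS_collision : forall t, collision_time x t -> forall j,
          (forall l, cvg (v l s @[s --> t^'-])) /\
          (v j s @[s --> t^'+] -->
             (\sum_(l in Jset x j t) m l * left_lim (v l) t) /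
             (\sum_(l in Jset x j t) m l)) }.

Definition psi N (m : 'I_N -> R) (omega : R -> R) (x v : 'I_N -> R -> R)
  (j : 'I_N) (s : R) : R :=
  v j s + \sum_(l : 'I_N) m l * omega (x j s - x l s).

End Defs.

(* Inside the cluster J = J_i(t) all particles sit at the same point, so the
   interaction term sum_l m_l omega(x_j - x_l) takes one common value W at time t
   for every j in J, and every weighted average of psi_j(t-) over a part of J is
   the corresponding average of v_j(t-) plus W.  The same holds for psi_i(t+): at
   a collision by the sticking rule, otherwise because the particles of J met
   earlier and already share their velocity.  It remains to compare velocity
   averages.  Split J into a left block (j < p) and a right block (j >= p): the
   mass-weighted separation sum m_j m_l (x_l - x_j) between the blocks is
   nonnegative before t and vanishes at t, so by the mean value theorem on a
   collision-free interval (t - d, t) the left limit of its derivative, the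
   momentum balance between the blocks, is nonpositive.  Hence the left block is
   on average at least as fast, and the mediant inequality places the average
   over J between the averages over the two blocks. *)

From HB Require Import structures.
From mathcomp Require Import all_boot all_order all_algebra.
From mathcomp Require Import all_classical all_reals all_analysis.
From mathcomp Require Import measurable_realfun ring lra zify.
Import Order.TTheory GRing.Theory Num.Theory.
Import numFieldNormedType.Exports.
Local Open Scope classical_set_scope.
Local Open Scope ring_scope.

Section RealAnalysis.
Context {R : realType}.

Lemma cvg_sumr {T : Type} (F : set_system T) {FF : Filter F} (I : Type)
    (r : seq I) (P : pred I) (f : I -> T -> R) (l : I -> R) :
  (forall j, P j -> f j s @[s --> F] --> l j) ->
  \sum_(j <- r | P j) f j s @[s --> F] --> \sum_(j <- r | P j) l j.
Proof. by apply: cvg_big; exact: add_continuous. Qed.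

Lemma is_derive_sumr (t : R) (I : Type) (r : seq I) (P : pred I)
    (f : I -> R -> R) (df : I -> R) :
  (forall j, P j -> is_derive t 1 (f j) (df j)) ->
  is_derive t 1 (fun s => \sum_(j <- r | P j) f j s) (\sum_(j <- r | P j) df j).
Proof.
move=> fP; elim: r => [|a r IH].
  rewrite big_nil (_ : (fun=> _) = cst 0); last by apply/funext => s; rewrite big_nil.
  exact: is_derive_cst.
rewrite big_cons; under eq_fun do rewrite big_cons.
by case: ifP => Pa //; exact: is_deriveD (fP _ Pa) IH.
Qed.

Lemma lipschitz_continuous (f : R -> R) (M : R) :
  (forall a b, `|f b - f a| <= M * `|b - a|) -> continuous f.
Proof.
move=> fM y; apply/cvgrPdist_le => e e0.
have M1 : 0 < `|M| + 1 by rewrite ltr_wpDl.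
near=> z; apply: le_trans (fM z y) _.
have yz : `|y - z| < e / (`|M| + 1).
  by near: z; apply: cvgr_dist_lt; rewrite ?divr_gt0.
have eE : e / (`|M| + 1) * (`|M| + 1) = e by rewrite divfK ?gt_eqF.
have := normr_ge0 M; have := normr_ge0 (y - z); have := ler_norm M.
nra.
Unshelve. all: by end_near. Qed.

Lemma left_lim_derive_le0 (G g : R -> R) (t d L : R) : 0 < d ->
  (forall s, t - d < s < t -> is_derive s 1 G (g s)) ->
  (forall s, t - d < s <= t -> {for s, continuous G}) ->
  (forall s, t - d < s < t -> G t <= G s) ->
  g s @[s --> t^'-] --> L -> L <= 0.
Proof.
move=> d0 Gg Gc Gmin gL; rewrite leNgt; apply/negP => L0.
have : \forall s \near t^'-, 0 < g s by apply: cvgr_gt gL _ L0.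
move=> /nbhs_ballP[e /= e0 gpos].
have [a [ad a_t ae]] : exists a, [/\ t - d < a, a < t & t - e < a].
  exists (t - Num.min d e / 2).
  have : Num.min d e <= d /\ Num.min d e <= e by split; rewrite ge_min lexx ?orbT.
  have : 0 < Num.min d e by rewrite lt_min d0.
  by move=> ? [? ?]; split; lra.
have [c] : exists2 c, c \in `]a, t[ & G t - G a = g c * (t - a).
  apply: MVT => // [c|].
    by rewrite in_itv /= => /andP[ac ct]; apply: Gg; apply/andP; split; lra.
  apply: continuous_in_subspaceT => c; rewrite in_setE /= in_itv /= => /andP[ac ct].
  by apply: Gc; apply/andP; split; lra.
rewrite in_itv /= => /andP[ac ct] GtGa.
have gc : 0 < g c.
  by apply: gpos => //; rewrite /ball /= gtr0_norm ?subr_gt0 //; lra.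
have := Gmin a; have : 0 < g c * (t - a) by rewrite mulr_gt0 ?subr_gt0.
lra.
Qed.

Lemma finite_points_avoid_left (I : finType) (P : I -> R -> Prop) (t : R) :
  0 < t -> (forall i s1 s2, P i s1 -> P i s2 -> s1 = s2) ->
  exists2 d, 0 < d <= t & forall i s, t - d < s < t -> ~ P i s.
Proof.
move=> t0 Puniq.
have /choice [dI dIP] : forall i, exists d, 0 < d /\ forall s, t - d < s < t -> ~ P i s.
  move=> i; case: (pselect (exists2 s0, s0 < t & P i s0)) => [[s0 s0t Ps0]|noP].
    exists (t - s0); split; first by rewrite subr_gt0.
    by move=> s /andP[s0s _] Ps; move: (Puniq _ _ _ Ps0 Ps) s0s => ->; lra.
  by exists 1; split => // s /andP[_ st] Ps; apply: noP; exists s.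
exists (\big[Num.min/t]_i dI i).
  by rewrite bigmin_le_id andbT lt_bigmin // => i _; case: (dIP i).
move=> i s /andP[sd st]; apply: (dIP i).2; rewrite st andbT.
by apply: le_lt_trans sd; rewrite lerD2l lerN2 bigmin_le.
Qed.
End RealAnalysis.

Section WeightedMeans.
Context {R : realFieldType}.

Lemma mediant_le (mA mB a b : R) : 0 < mA -> 0 <= mB ->
  mA * b <= mB * a -> (a + b) / (mA + mB) <= a / mA.
Proof.
move=> mA0 mB0 ba; have mAB : 0 < mA + mB by exact: ltr_wpDr.
rewrite -subr_ge0.
have -> : a / mA - (a + b) / (mA + mB) = (mB * a - mA * b) / (mA * (mA + mB)).
  by field; rewrite ?gt_eqF.
by rewrite divr_ge0 ?subr_ge0 // ltW ?mulr_gt0.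
Qed.

Lemma le_mediant (mA mB a b : R) : 0 <= mA -> 0 < mB ->
  mA * b <= mB * a -> b / mB <= (a + b) / (mA + mB).
Proof.
move=> mA0 mB0 ba; have mAB : 0 < mA + mB by exact: ltr_wpDl.
rewrite -subr_ge0.
have -> : (a + b) / (mA + mB) - b / mB = (mB * a - mA * b) / (mB * (mA + mB)).
  by field; rewrite ?gt_eqF.
by rewrite divr_ge0 ?subr_ge0 // ltW ?mulr_gt0.
Qed.

Lemma weighted_mean_shift (I : Type) (r : seq I) (P : pred I) (m f : I -> R) (c : R) :
  \sum_(j <- r | P j) m j != 0 ->
  (\sum_(j <- r | P j) m j * (f j + c)) / \sum_(j <- r | P j) m j =
  (\sum_(j <- r | P j) m j * f j) / \sum_(j <- r | P j) m j + c.
Proof.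
move=> m0; under eq_bigr do rewrite mulrDr.
by rewrite big_split /= -mulr_suml mulrDl (mulrC _ c) mulfK.
Qed.

Lemma sum_split_ltn {n : nat} (p : nat) (A : {set 'I_n}) (F : 'I_n -> R) :
  \sum_(j in A) F j = \sum_(j in A | (j < p)%N) F j + \sum_(j in A | (p <= j)%N) F j.
Proof.
rewrite (bigID (fun j : 'I_n => (j < p)%N)) /=.
by under [X in _ + X]eq_bigl do rewrite -leqNgt.
Qed.
End WeightedMeans.

Lemma standing_H_lipschitz {R : realType} (omega phi : R -> R) :
  standing_H omega phi ->
  exists M, forall a b, `|omega b - omega a| <= M * `|b - a|.
Proof.
case=> _ _ _ _ phi_meas _ [M phiM] _ ftc; exists M.
have M0 : 0 <= M := le_trans (normr_ge0 _) (phiM 0).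
suff lip : forall a b, a <= b -> `|omega b - omega a| <= M * (b - a).
  move=> a b; case: (leP a b) => [ab | /ltW ba].
    by rewrite [X in M * X]ger0_norm ?subr_ge0 //; exact: lip.
  by rewrite distrC [X in M * X]distrC [X in M * X]ger0_norm ?subr_ge0 //; exact: lip.
move=> a b ab; rewrite -lee_fin -abse_EFin ftc //.
have mab : measurable (`[a, b] : set R) by exact: measurable_itv.
have phi_ab : measurable_fun `[a, b] (fun y => (phi y)%:E).
  by apply/measurable_EFinP; exact: measurable_funTS.
apply: le_trans (le_abse_integral lebesgue_measure mab phi_ab) _.
apply: le_trans (integral_le_bound (mu := lebesgue_measure) (M%:E) mab phi_ab _ _) _.
- by rewrite lee_fin.
- by apply: aeW => y _ /=; rewrite lee_fin.
rewrite [X in (_ * X <= _)%E](_ : _ = if a < b then (b - a)%:E else 0%E); last first.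
  by have := lebesgue_measure_itv `[a, b]; rewrite /= lte_fin.
by case: ifP => _; rewrite ?EFinM // mule0 lee_fin mulr_ge0 ?subr_ge0.
Qed.

Definition omega_conv {R : realType} {N : nat} (m : 'I_N -> R) (omega : R -> R)
  (x : 'I_N -> R -> R) j (s : R) := \sum_(l : 'I_N) m l * omega (x j s - x l s).

Section StickyCuckerSmale.
Context {R : realType} {omega phi : R -> R} {N : nat} {m : 'I_N -> R}
  {x0 v0 : 'I_N -> R} {x v : 'I_N -> R -> R}.
Hypothesis omegaH : standing_H omega phi.
Hypothesis dyn : sticky_CS m phi x0 v0 x v.

Lemma x_cvg j (t : R) : 0 < t -> x j s @[s --> t] --> x j t.
Proof.
move=> t0; have := SCS_cont dyn (j := j).
move/(@subspace_continuousP R [set s : R | 0 <= s] R (x j)) => /(_ t (ltW t0)).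
by rewrite within_interior //; exact: lt_le_nbhsr.
Qed.

Lemma v_cvg_no_collision j (t : R) : 0 < t -> ~ collision_time x t ->
  v j s @[s --> t] --> v j t.
Proof.
move=> t0 nct; apply: differentiable_continuous; apply/derivable1_diffP.
by have [_ dv] := SCS_ode dyn t0 nct j; exact: (@ex_derive _ _ _ _ _ _ _ dv).
Qed.

Lemma v_left_cvg j (t : R) : 0 < t -> v j s @[s --> t^'-] --> left_lim (v j) t.
Proof.
move=> t0; case: (pselect (collision_time x t)) => [ct | nct].
  by have [vcvg _] := SCS_collision dyn ct j; exact: vcvg.
have vt : v j s @[s --> t^'-] --> v j t.
  by apply: cvg_within_filter; exact: v_cvg_no_collision.
by rewrite /left_lim (cvg_lim _ vt).
Qed.

Lemma omega_conv_cvg j (t : R) (F : set_system R) {FF : Filter F} :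
  0 < t -> F `=>` nbhs t ->
  omega_conv m omega x j s @[s --> F] --> omega_conv m omega x j t.
Proof.
move=> t0 Ft; apply: cvg_sumr => l _; apply: cvgM; first exact: cvg_cst.
have [M omegaM] := standing_H_lipschitz _ _ omegaH.
apply: continuous_cvg; first exact: (lipschitz_continuous _ _ omegaM _).
by apply: cvgB => A /x_cvg-/(_ t0)/Ft.
Qed.

Lemma omega_conv_Jset i j (t : R) :
  j \in Jset x i t -> omega_conv m omega x j t = omega_conv m omega x i t.
Proof. by rewrite inE => /eqP xji; apply: eq_bigr => l _; rewrite xji. Qed.

Lemma left_lim_psi j (t : R) : 0 < t ->
  left_lim (psi m omega x v j) t = left_lim (v j) t + omega_conv m omega x j t.
Proof.
move=> t0; apply: cvg_lim => //; apply: cvgD; first exact: v_left_cvg.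
by apply: omega_conv_cvg => //; exact: cvg_within.
Qed.

Definition first_meeting (jk : 'I_N * 'I_N) (s : R) :=
  0 < s /\ x jk.1 s = x jk.2 s /\ forall r, 0 <= r -> r < s -> x jk.1 r <> x jk.2 r.

Lemma first_meeting_uniq jk (s1 s2 : R) :
  first_meeting jk s1 -> first_meeting jk s2 -> s1 = s2.
Proof.
move=> [s10 [meet1 apart1]] [s20 [meet2 apart2]].
by case: (ltgtP s1 s2) => // [/(apart2 _ (ltW s10)) | /(apart1 _ (ltW s20))].
Qed.

Lemma collision_free_left (t : R) : 0 < t ->
  exists2 d, 0 < d <= t & forall s, t - d < s < t -> ~ collision_time x s.
Proof.
move=> t0; have [d d_pos avoid] := finite_points_avoid_left _ _ t t0 first_meeting_uniq.
exists d => // s sd [s0 [j [k jk]]].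
exact: (avoid (j, k) s sd (conj s0 jk)).
Qed.

Lemma Jset_itv i (t : R) j : 0 <= t ->
  (j \in Jset x i t) = (ilo x i t <= j <= ihi x i t)%N.
Proof.
move=> t0; have iJ : i \in Jset x i t by rewrite inE.
rewrite /ilo /ihi.
case: arg_minnP => // lo; rewrite inE => /eqP xlo lo_min.
case: arg_maxnP => // hi; rewrite inE => /eqP xhi hi_max.
apply/idP/andP => [jJ | [lo_j j_hi]]; first by split; [exact: lo_min | exact: hi_max].
rewrite inE eq_le -{1}xhi -xlo.
by rewrite (SCS_order dyn t0 j_hi) (SCS_order dyn t0 lo_j).
Qed.

Lemma Jset_lower i (t : R) k : 0 <= t -> k \in Jset x i t -> forall j : 'I_N,
  (ilo x i t <= j <= k)%N = (j \in Jset x i t) && (j < k.+1)%N.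
Proof.
move=> t0 kJ j; rewrite !Jset_itv // in kJ *.
by apply/idP/idP; lia.
Qed.

Lemma Jset_upper i (t : R) k : 0 <= t -> k \in Jset x i t -> forall j : 'I_N,
  (k <= j <= ihi x i t)%N = (j \in Jset x i t) && (k <= j)%N.
Proof.
move=> t0 kJ j; rewrite !Jset_itv // in kJ *.
by apply/idP/idP; lia.
Qed.

(* Particles that coincide at a non-collision time met earlier, hence stay
   together on a neighbourhood of [t]. *)
Lemma Jset_v_eq i j (t : R) : 0 < t -> ~ collision_time x t ->
  j \in Jset x i t -> v j t = v i t.
Proof.
move=> t0 nct; rewrite inE => /eqP xji.
have [s0 [s0_ge0 s0t xji0]] : exists s0, [/\ 0 <= s0, s0 < t & x j s0 = x i s0].
  apply: contrapT => never; apply: nct; split => //; exists j, i; split => // s s0 st xs.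
  by apply: never; exists s.
have near_eq : \forall s \near t, x j s = x i s.
  near=> s; apply: (SCS_sticky dyn s0_ge0) => //.
  by near: s; exact: lt_le_nbhsr.
have [dj _] := SCS_ode dyn t0 nct j; have [di _] := SCS_ode dyn t0 nct i.
rewrite -(@derive_val _ _ _ _ _ _ _ dj) -(@derive_val _ _ _ _ _ _ _ di).
exact: near_eq_derive.
Unshelve. all: by end_near. Qed.

Lemma right_lim_psi i (t : R) : 0 < t -> \sum_(l in Jset x i t) m l != 0 ->
  right_lim (psi m omega x v i) t =
  (\sum_(l in Jset x i t) m l * left_lim (v l) t) / (\sum_(l in Jset x i t) m l)
  + omega_conv m omega x i t.
Proof.
move=> t0 mJ0; apply: cvg_lim => //; apply: cvgD; last first.
  by apply: omega_conv_cvg => //; exact: cvg_within.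
case: (pselect (collision_time x t)) => [ct | nct].
  by have [_ vcvg] := SCS_collision dyn ct i.
have -> : \sum_(l in Jset x i t) m l * left_lim (v l) t =
          (\sum_(l in Jset x i t) m l) * v i t.
  rewrite mulr_suml; apply: eq_bigr => l lJ; congr (_ * _).
  rewrite -(Jset_v_eq _ _ _ t0 nct lJ); apply: cvg_lim => //.
  by apply: cvg_within_filter; exact: v_cvg_no_collision.
by rewrite mulrAC divff // mul1r; apply: cvg_within_filter; exact: v_cvg_no_collision.
Qed.

Lemma left_lim_psi_mean i (t : R) (P : pred 'I_N) : 0 < t ->
  {subset P <= Jset x i t} -> \sum_(j | P j) m j != 0 ->
  (\sum_(j | P j) m j * left_lim (psi m omega x v j) t) / (\sum_(j | P j) m j) =
  (\sum_(j | P j) m j * left_lim (v j) t) / (\sum_(j | P j) m j)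
  + omega_conv m omega x i t.
Proof.
move=> t0 PJ mP0; rewrite -weighted_mean_shift //; congr (_ / _).
apply: eq_bigr => j Pj.
by rewrite left_lim_psi // (omega_conv_Jset _ _ _ (PJ _ Pj)).
Qed.

Lemma left_block_faster i (t : R) (p : nat) : 0 < t -> (forall j, 0 <= m j) ->
  (\sum_(j in Jset x i t | (j < p)%N) m j) *
    (\sum_(j in Jset x i t | (p <= j)%N) m j * left_lim (v j) t) <=
  (\sum_(j in Jset x i t | (p <= j)%N) m j) *
    (\sum_(j in Jset x i t | (j < p)%N) m j * left_lim (v j) t).
Proof.
move=> t0 m_ge0; set J := Jset x i t.
pose pairs (F : 'I_N -> 'I_N -> R) :=
  \sum_(j in J | (j < p)%N) \sum_(l in J | (p <= l)%N) m j * m l * F j l.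
rewrite -subr_le0.
have -> : (\sum_(j in J | (j < p)%N) m j) *
    (\sum_(j in J | (p <= j)%N) m j * left_lim (v j) t) -
  (\sum_(j in J | (p <= j)%N) m j) *
    (\sum_(j in J | (j < p)%N) m j * left_lim (v j) t) =
  pairs (fun j l => left_lim (v l) t - left_lim (v j) t).
  rewrite [X in _ - X]mulrC /pairs !mulr_suml -sumrB; apply: eq_bigr => j _.
  by rewrite !mulr_sumr -sumrB; apply: eq_bigr => l _; ring.
have [d /andP[d0 dt] no_collision] := collision_free_left _ t0.
apply: (left_lim_derive_le0 (fun s => pairs (fun j l => x l s - x j s))
  (fun s => pairs (fun j l => v l s - v j s)) t d _ d0).
- move=> s /andP[sd st]; have s0 : 0 < s by lra.
  have nct := no_collision s (introT andP (conj sd st)).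
  apply: is_derive_sumr => j _; apply: is_derive_sumr => l _.
  have [dl _] := SCS_ode dyn s0 nct l; have [dj _] := SCS_ode dyn s0 nct j.
  exact: is_deriveZ (is_deriveB dl dj).
- move=> s /andP[sd _]; have s0 : 0 < s by lra.
  apply: cvg_sumr => j _; apply: cvg_sumr => l _.
  by apply: cvgM; [exact: cvg_cst | apply: cvgB; exact: x_cvg].
- move=> s /andP[sd _]; have s0 : 0 <= s by lra.
  rewrite /pairs big1 => [|j /andP[jJ _]]; last first.
    rewrite big1 // => l /andP[lJ _].
    by move: jJ lJ; rewrite !inE => /eqP-> /eqP->; rewrite subrr mulr0.
  apply: sumr_ge0 => j /andP[_ jp]; apply: sumr_ge0 => l /andP[_ pl].
  rewrite mulr_ge0 ?mulr_ge0 // subr_ge0; apply: (SCS_order dyn s0).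
  exact: leq_trans (ltnW jp) pl.
- apply: cvg_sumr => j _; apply: cvg_sumr => l _.
  by apply: cvgM; [exact: cvg_cst | apply: cvgB; exact: v_left_cvg].
Qed.

End StickyCuckerSmale.

Theorem lemma2p3 (R : realType) (omega phi : R -> R) (N : nat)
  (m : 'I_N -> R) (x0 v0 : 'I_N -> R) (x v : 'I_N -> R -> R) :
  standing_H omega phi ->
  (forall j, 0 < m j) -> \sum_(j : 'I_N) m j = 1 ->
  (forall j k : 'I_N, (j <= k)%N -> x0 j <= x0 k) ->
  sticky_CS m phi x0 v0 x v ->
  forall (i : 'I_N) (t : R), 0 < t ->
  forall k : 'I_N, k \in Jset x i t ->
  let psim := fun j => left_lim (psi m omega x v j) t in
  let avgJ := (\sum_(j in Jset x i t) m j * psim j) /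
              (\sum_(j in Jset x i t) m j) in
  [/\ (\sum_(j : 'I_N | (ilo x i t <= j <= k)%N) m j * psim j) /
        (\sum_(j : 'I_N | (ilo x i t <= j <= k)%N) m j) >= avgJ,
      avgJ = right_lim (psi m omega x v i) t
    & right_lim (psi m omega x v i) t >=
        (\sum_(j : 'I_N | (k <= j <= ihi x i t)%N) m j * psim j) /
        (\sum_(j : 'I_N | (k <= j <= ihi x i t)%N) m j)].
Proof.
move=> omegaH m_pos _ _ dyn i t t0 k kJ psim avgJ.
have m_ge0 j : 0 <= m j := ltW (m_pos j).
have mass_pos (P : pred 'I_N) : P k -> 0 < \sum_(j | P j) m j.
  by move=> Pk; rewrite (bigD1 k) //= ltr_wpDr ?sumr_ge0.
rewrite /avgJ /psim !(eq_bigl _ _ (Jset_lower dyn _ _ _ (ltW t0) kJ)).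
rewrite !(eq_bigl _ _ (Jset_upper dyn _ _ _ (ltW t0) kJ)).
rewrite !(left_lim_psi_mean omegaH dyn i _ _ t0) ?gt_eqF ?mass_pos ?kJ ?ltnSn ?leqnn //;
  try by move=> j /andP[].
rewrite (right_lim_psi omegaH dyn _ _ t0) ?gt_eqF ?mass_pos //; split => //.
- rewrite lerD2r !(sum_split_ltn k.+1); apply: mediant_le.
  + by apply: mass_pos; rewrite kJ /=.
  + by rewrite sumr_ge0.
  + exact: left_block_faster dyn _ _ _ t0 m_ge0.
- rewrite lerD2r !(sum_split_ltn k); apply: le_mediant.
  + by rewrite sumr_ge0.
  + by apply: mass_pos; rewrite kJ /=.
  + exact: left_block_faster dyn _ _ _ t0 m_ge0.
Qed.
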